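(* Let $p$ be an even integer, $q\ge1$, $W\ge q$, and $a=1-1/W$. Consider the following random $p\times q$ matrix $A$: for each $i\in[p/2]$ choose $j\in[q]$ uniformly at random and set $A_{i+p/2}=A_i=ae_j+b(\mathbf{1}_q-e_j)$, where $b\ge 0$ is chosen so that $\|A_i\|_2=1$ (a YES instance). With probability $1/2$, transform $A$ into a NO instance: choose $i^*\in[p/2]$ uniformly at random and, if $A_{i^*}=ae_{j^*}+b(\mathbf{1}_q-e_{j^*})$, set $A_{i^*+p/2}=-ae_{j^*}+b(\mathbf{1}_q-e_{j^*})$. If a deterministic algorithm reads at most $s$ positions of $A$ and distinguishes YES and NO instances with probability at least $2/3$ (over this distribution), then $s=\Omega(pq)$.
   Context: $e_j$ is the $j$-th standard unit vector in $\mathbb{R}^q$, $\mathbf{1}_q$ the all-ones vector. *)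

From HB Require Import structures.
From mathcomp Require Import all_boot all_order all_algebra.
From mathcomp Require Import reals.
Set Implicit Arguments. Unset Strict Implicit. Unset Printing Implicit Defensive.
Import Order.TTheory GRing.Theory Num.Theory.
Local Open Scope ring_scope.

Section Defs.
Variable R : realType.

(* A deterministic adaptive query algorithm on p x q real matrices:
   a decision tree whose internal nodes read one entry (i,j) and branch
   on its (real) value, and whose leaves output a bit
   (true = "YES instance", false = "NO instance"). *)
Inductive dtree (p q : nat) : Type :=
| Leaf of bool
| Query of 'I_p & 'I_q & (R -> dtree p q).

Fixpoint run p q (t : dtree p q) (A : 'M[R]_(p, q)) : bool :=
  match t with
  | Leaf b => b
  | Query i j k => run (k (A i j)) A
  end.

Inductive depth_le p q : nat -> dtree p q -> Prop :=
| depth_leaf s b : depth_le s (Leaf p q b)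
| depth_query s i j k : (forall x, depth_le s (k x)) ->
    depth_le s.+1 (Query i j k).

Definition a_of (W : R) : R := 1 - W^-1.
(* b >= 0 with a^2 + (q-1) b^2 = 1 (for q = 1 this is 0). *)
Definition b_of (q : nat) (W : R) : R :=
  Num.sqrt ((1 - a_of W ^+ 2) / (q.-1)%:R).

Definition half_mx m q (W : R) (J : {ffun 'I_m -> 'I_q}) : 'M[R]_(m, q) :=
  \matrix_(i, k) (if k == J i then a_of W else b_of q W).

Definition yes_mx m q W (J : {ffun 'I_m -> 'I_q}) : 'M[R]_(m + m, q) :=
  col_mx (half_mx W J) (half_mx W J).

Definition no_mx m q W (J : {ffun 'I_m -> 'I_q}) (istar : 'I_m)
  : 'M[R]_(m + m, q) :=
  col_mx (half_mx W J)
    (\matrix_(i, k) (if (i == istar) && (k == J i) then - a_of W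
                     else half_mx W J i k)).

(* Probability (over the distribution of the statement) that t answers
   correctly: YES/NO each with probability 1/2, J uniform in [q]^[m],
   istar uniform in [m]. *)
Definition success_prob m q W (t : dtree (m + m) q) : R :=
  2^-1 * ((q ^ m)%:R^-1 *
          \sum_(J : {ffun 'I_m -> 'I_q}) (run t (yes_mx W J) == true)%:R)
  + 2^-1 * (((m * q ^ m)%:R)^-1 *
          \sum_(J : {ffun 'I_m -> 'I_q}) \sum_(istar : 'I_m)
             (run t (no_mx W J istar) == false)%:R).

End Defs.

(* A NO instance differs from the YES instance with the same columns [J] only
   in the cell (i + m, J i), so an algorithm succeeding with probability 2/3
   must read that cell on a constant fraction of the pairs (J, i).  Fix all
   columns but [J i]: until the algorithm meets the planted column of row pair
   i, it sees only b's there and follows one path, so hitting the planted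
   column for a fraction of the q choices costs Omega(q) queries in that row
   pair on average.  Summing over the m row pairs gives s = Omega(m q). *)

From HB Require Import structures.
From mathcomp Require Import all_boot all_order all_algebra.
From mathcomp Require Import reals.
From mathcomp Require Import zify ring lra.
Set Implicit Arguments. Unset Strict Implicit. Unset Printing Implicit Defensive.
Import Order.TTheory GRing.Theory Num.Theory.

Section QueryPaths.
Variables (R : realType) (p q : nat).
Implicit Types (t : dtree R p q) (A B : 'M[R]_(p, q)).

Fixpoint queried t A : seq ('I_p * 'I_q) :=
  match t with
  | Leaf _ => [::]
  | Query i j k => (i, j) :: queried (k (A i j)) A
  end.

Lemma run_eq_on_queried t A B :
  {in queried t A, forall x, A x.1 x.2 = B x.1 x.2} -> run t A = run t B.
Proof.
elim: t => [b|i j k IH] //= AB.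
rewrite -(AB (i, j)) ?mem_head //; apply: IH => x x_in.
by apply: AB; rewrite in_cons x_in orbT.
Qed.

Lemma size_queried s t A : depth_le s t -> (size (queried t A) <= s)%N.
Proof. by elim => //= s' i j k _ IH; rewrite ltnS. Qed.

End QueryPaths.

Section PlantedColumn.
Variables (R : realType) (p q : nat) (rows : pred 'I_p).
Variables (M0 : 'M[R]_(p, q)) (A : 'I_q -> 'M[R]_(p, q)).
Hypothesis A_off_planted : forall j r c, ~~ (rows r && (c == j)) -> A j r c = M0 r c.

Definition finds (t : dtree R p q) j : bool :=
  has (fun x => rows x.1 && (x.2 == j)) (queried t (A j)).

Definition row_cost (t : dtree R p q) j : nat :=
  count (fun x => rows x.1) (queried t (A j)).

Lemma finds_row_cost_Query r c k j : ~~ (rows r && (c == j)) ->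
  finds (Query r c k) j = finds (k (M0 r c)) j /\
  row_cost (Query r c k) j = rows r + row_cost (k (M0 r c)) j.
Proof.
move=> off; rewrite /finds /row_cost /= A_off_planted //.
by move: off; case: (rows r) => //= /negbTE->.
Qed.

(* All [A j] follow the path of [M0] until it first queries a cell [(r, j)]
   with [rows r]: the columns found are the ones met on that path, and the
   [k]-th of them costs at least [k] row queries. *)
Lemma sum_finds_mul_card_le t (P : pred 'I_q) :
  ((\sum_(j | P j) finds t j) * #|P| <= 2 * \sum_(j | P j) row_cost t j)%N.
Proof.
elim: t P => [b|r c k IH] P; first by rewrite big1.
set t' := k (M0 r c).
have [/andP[rows_r Pc]|off] := boolP (rows r && P c); last first.
  have off_j j : P j -> ~~ (rows r && (c == j)).
    by move=> Pj; apply: contra off => /andP[-> /eqP->].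
  have -> : \sum_(j | P j) finds (Query r c k) j = \sum_(j | P j) finds t' j.
    by apply: eq_bigr => j /off_j /(finds_row_cost_Query k) [->].
  apply: leq_trans (IH _ P) _; rewrite leq_mul2l leq_sum ?orbT // => j /off_j.
  by move/(finds_row_cost_Query k)=> -[_ ->]; apply: leq_addl.
rewrite (cardD1x Pc) !(bigD1 c Pc) /=.
set P' := [pred j | P j & j != c].
have off_j j : P' j -> ~~ (rows r && (c == j)).
  by case/andP=> _; rewrite eq_sym => /negbTE->; rewrite andbF.
have -> : \sum_(j | P j && (j != c)) finds (Query r c k) j = \sum_(j | P' j) finds t' j.
  by apply: eq_bigr => j /off_j /(finds_row_cost_Query k) [->].
have -> : \sum_(j | P j && (j != c)) row_cost (Query r c k) j
          = #|P'| + \sum_(j | P' j) row_cost t' j.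
  rewrite -sum1_card -big_split; apply: eq_bigr => j /off_j.
  by move/(finds_row_cost_Query k)=> -[_ ->]; rewrite rows_r.
have found_c : finds (Query r c k) c by rewrite /finds /= rows_r eqxx.
have cost_c : (0 < row_cost (Query r c k) c)%N by rewrite /row_cost /= rows_r.
have finds_le : (\sum_(j | P' j) finds t' j <= #|P'|)%N.
  by rewrite -sum1_card leq_sum // => j _; apply: leq_b1.
move: (IH (M0 r c) P') cost_c finds_le; rewrite -/t' found_c /=.
by move: #|P'| (row_cost _ c) => d cc; nia.
Qed.

End PlantedColumn.

Definition half_row m (r : 'I_(m + m)) : 'I_m :=
  match split r with inl i => i | inr i => i end.

Lemma half_row_lshift m (i : 'I_m) : half_row (lshift m i) = i.
Proof. by rewrite /half_row (unsplitK (inl _ i)). Qed.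

Lemma half_row_rshift m (i : 'I_m) : half_row (rshift m i) = i.
Proof. by rewrite /half_row (unsplitK (inr _ i)). Qed.

Lemma sum_count_half_row m n (l : seq ('I_(m + m) * 'I_n)) :
  \sum_(i < m) count (fun x => half_row x.1 == i) l = size l.
Proof.
elim: l => [|x l IH] /=; first by rewrite big1.
rewrite big_split /= IH -add1n; congr (_ + _).
by rewrite (bigD1 (half_row x.1)) //= eqxx big1 // => j /negbTE; rewrite eq_sym => ->.
Qed.

Definition ffun_upd m n (J : {ffun 'I_m -> 'I_n}) i j : {ffun 'I_m -> 'I_n} :=
  [ffun k => if k == i then j else J k].

Lemma sum_ffun_upd m n (i : 'I_m) (F : {ffun 'I_m -> 'I_n} -> nat) :
  \sum_J \sum_(j < n) F (ffun_upd J i j) = n * \sum_J F J.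
Proof.
pose swap (x : {ffun 'I_m -> 'I_n} * 'I_n) := (ffun_upd x.1 i x.2, x.1 i).
have swapK : involutive swap.
  case=> J j; rewrite /swap /= ffunE eqxx; congr (_, _).
  by apply/ffunP => k; rewrite !ffunE; case: eqP => [->|].
have -> : \sum_J \sum_(j < n) F (ffun_upd J i j) = \sum_x F (swap x).1.
  by rewrite pair_bigA.
rewrite (reindex_inj (inv_inj swapK)).
under eq_bigr do rewrite swapK.
rewrite -(pair_bigA _ (fun J _ => F J)) big_distrr /=.
by apply: eq_bigr => J _; rewrite sum_nat_const card_ord.
Qed.

Section Instances.
Variables (R : realType) (m q' : nat) (W : R).
Local Notation q := q'.+1.
Implicit Types (J : {ffun 'I_m -> 'I_q}) (i : 'I_m).

Lemma yes_mxE J r c : yes_mx W J r c = half_mx W J (half_row r) c.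
Proof.
case: (split_ordP r) => r0 ->; rewrite ?col_mxEu ?col_mxEd.
  by rewrite half_row_lshift.
by rewrite half_row_rshift.
Qed.

Lemma no_mxE J i r c : (r, c) != (rshift m i, J i) -> no_mx W J i r c = yes_mx W J r c.
Proof.
case: (split_ordP r) => r0 -> rc; rewrite ?col_mxEu ?col_mxEd // mxE.
case: eqP => [r0i|] //=; case: eqP => [cJ|] //.
by move: rc; rewrite cJ r0i eqxx.
Qed.

Variable t : dtree R (m + m) q.

Definition reads_flip J i : bool := (rshift m i, J i) \in queried t (yes_mx W J).

Lemma no_correct_le_yes_wrong_flip J i :
  ((run t (no_mx W J i) == false) <= (run t (yes_mx W J) == false) + reads_flip J i)%N.
Proof.
have [_|unread] := boolP (reads_flip J i).
  by case: (_ == false); case: (_ == false).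
rewrite addn0 (@run_eq_on_queried _ _ _ t (yes_mx W J) (no_mx W J i)) // => -[r c] rc.
by rewrite no_mxE //; apply: contraNneq unread; rewrite /reads_flip => <-.
Qed.

Definition queries_in_row i J : nat :=
  count (fun x => half_row x.1 == i) (queried t (yes_mx W J)).

Lemma sum_reads_flip_upd i J0 :
  ((\sum_(j < q) reads_flip (ffun_upd J0 i j) i) * q <=
   2 * \sum_(j < q) queries_in_row i (ffun_upd J0 i j))%N.
Proof.
pose M0 := (\matrix_(r, c) (if half_row r == i then b_of q W else yes_mx W J0 r c))%R.
have off_planted j r c : ~~ ((half_row r == i) && (c == j)) ->
    yes_mx W (ffun_upd J0 i j) r c = M0 r c.
  rewrite yes_mxE [M0 r c]mxE yes_mxE !mxE !ffunE.
  by case: (half_row r == i) => //= /negbTE->.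
have := sum_finds_mul_card_le off_planted t predT.
rewrite card_ord; apply: leq_trans; rewrite leq_mul2r leq_sum ?orbT // => j _.
have [flip|//] := boolP (reads_flip _ i); rewrite lt0b; apply/hasP.
exists (rshift m i, j); last by rewrite /= half_row_rshift !eqxx.
by move: flip; rewrite /reads_flip ffunE eqxx.
Qed.

Lemma sum_reads_flip_le s : depth_le s t ->
  (q * \sum_J \sum_i reads_flip J i <= 2 * (q ^ m * s))%N.
Proof.
move=> depth_t.
have row_bound i : (q * \sum_J reads_flip J i <= 2 * \sum_J queries_in_row i J)%N.
  rewrite -(leq_pmul2l (ltn0Sn q')) [X in (_ <= X)%N]mulnCA.
  rewrite -(sum_ffun_upd i (reads_flip^~ i)) -(sum_ffun_upd i (queries_in_row i)).
  rewrite !big_distrr /=; apply: leq_sum => J0 _; rewrite mulnC.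
  exact: sum_reads_flip_upd.
rewrite exchange_big big_distrr /=.
apply: (@leq_trans (\sum_i 2 * \sum_J queries_in_row i J)).
  by apply: leq_sum => i _; apply: row_bound.
rewrite -big_distrr leq_mul2l exchange_big /=.
apply: (@leq_trans (\sum_(J : {ffun 'I_m -> 'I_q}) s)).
  by apply: leq_sum => J _; rewrite sum_count_half_row size_queried.
by rewrite sum_nat_const card_ffun !card_ord.
Qed.

Definition yes_correct : nat := \sum_J (run t (yes_mx W J) == true).
Definition no_correct : nat := \sum_J \sum_i (run t (no_mx W J i) == false).

Lemma sum_no_yes_correct_le :
  (no_correct + m * yes_correct <= m * q ^ m + \sum_J \sum_i reads_flip J i)%N.
Proof.
have -> : (q ^ m = #|{ffun 'I_m -> 'I_q}|)%N by rewrite card_ffun !card_ord.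
rewrite -sum1_card !big_distrr -!big_split /=; apply: leq_sum => J _.
have : (\sum_i (run t (no_mx W J i) == false) <=
          \sum_i ((run t (yes_mx W J) == false) + reads_flip J i))%N.
  by apply: leq_sum => i _; apply: no_correct_le_yes_wrong_flip.
rewrite big_split /= sum_nat_const card_ord.
by case: (run t (yes_mx W J)) => /=; lia.
Qed.

Lemma depth_ge_of_counts s : (0 < m)%N -> depth_le s t ->
  (4 * (m * q ^ m) <= 3 * (m * yes_correct + no_correct))%N -> (m * q <= 6 * s)%N.
Proof.
move=> m_gt0 depth_t success.
have qm_gt0 : (0 < q ^ m)%N by rewrite expn_gt0.
have := sum_reads_flip_le depth_t; have := sum_no_yes_correct_le; nia.
Qed.

Local Open Scope ring_scope.

Lemma success_probE : (0 < m)%N ->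
  success_prob W t = (m * yes_correct + no_correct)%:R / (2 * (m * q ^ m))%:R.
Proof.
move=> m_gt0; rewrite /success_prob /yes_correct /no_correct.
under [X in _ + _ * (_ * X)]eq_bigr do rewrite -natr_sum.
rewrite -!natr_sum !natrD !natrM.
have qm_gt0 : 0 < (q ^ m)%:R :> R by rewrite ltr0n expn_gt0.
have mr_gt0 : 0 < m%:R :> R by rewrite ltr0n.
by field; rewrite !lt0r_neq0 ?addr_gt0 ?mulr_gt0.
Qed.

Lemma counts_of_success_ge : (0 < m)%N -> 2 / 3 <= success_prob W t ->
  (4 * (m * q ^ m) <= 3 * (m * yes_correct + no_correct))%N.
Proof.
move=> m_gt0; rewrite success_probE //.
have : (0 < m * q ^ m)%N by rewrite muln_gt0 m_gt0 expn_gt0.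
move: (m * q ^ m)%N (m * yes_correct + no_correct)%N => N Y N_gt0.
by rewrite ler_pdivlMr ?ltr0n ?muln_gt0 // -(ler_nat R) !natrM; lra.
Qed.

End Instances.

Local Open Scope ring_scope.

Theorem mainTheorem12 (R : realType) :
  exists c : R, 0 < c /\
  forall (m q : nat) (W : R) (s : nat) (t : dtree R (m + m) q),
    (0 < m)%N -> (1 <= q)%N -> q%:R <= W ->
    depth_le s t ->
    2 / 3 <= success_prob W t ->
    c * ((m + m) * q)%:R <= s%:R.
Proof.
(* Neither [q <= W] nor the values of [a] and [b] matter: only that a NO
   instance differs from its YES instance in one cell. *)
exists 12^-1; split=> [|m [//|q'] W s t m_gt0 _ _ depth_t success]; first lra.
have := depth_ge_of_counts m_gt0 depth_t (counts_of_success_ge m_gt0 success).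
rewrite -(ler_nat R) !natrM natrD; lra.
Qed.
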